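(* Let $\mathbb{X}$ be a real normed space, $x_1,x_2\in S_{\mathbb{X}}$ and $\epsilon_1,\epsilon_2\in(0,1)$. If $F(x_1,\epsilon_1)=F(x_2,\epsilon_2)$, then $x_1=\pm x_2$ and $\epsilon_1=\epsilon_2$.
   Context: $S_{\mathbb{X}}$ is the unit sphere. For $x,y\in\mathbb{X}$ and $\epsilon\in[0,1)$, $x\perp_D^{\epsilon} y$ means $\|x+\lambda y\|\geq\sqrt{1-\epsilon^2}\,\|x\|$ for all $\lambda\in\mathbb{R}$; $F(x,\epsilon)=\{y\in\mathbb{X}: x\perp_D^{\epsilon}y\}$. *)

From mathcomp Require Import all_boot all_order all_algebra.
From mathcomp Require Import all_classical all_reals all_analysis.
Set Implicit Arguments. Unset Strict Implicit. Unset Printing Implicit Defensive.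
Import Order.TTheory GRing.Theory Num.Theory.
Import numFieldNormedType.Exports.
Local Open Scope classical_set_scope.
Local Open Scope ring_scope.

(* Approximate Birkhoff-James orthogonality (Dragomir's):
   x _|_D^eps y  iff  ||x + lambda y|| >= sqrt(1 - eps^2) ||x|| for all real lambda. *)
Definition dorth (R : realType) (V : normedModType R) (eps : R) (x y : V) : Prop :=
  forall lambda : R, Num.sqrt (1 - eps ^+ 2) * `|x| <= `|x + lambda *: y|.

Definition Fset (R : realType) (V : normedModType R) (x : V) (eps : R) : set V :=
  [set y | dorth eps x y].

From mathcomp Require Import all_boot all_order all_algebra.
From mathcomp Require Import all_classical all_reals all_analysis.
From mathcomp Require Import ring lra.
Import Order.TTheory GRing.Theory Num.Theory.
Import numFieldNormedType.Exports.
Local Open Scope classical_set_scope.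
Local Open Scope ring_scope.
Set Implicit Arguments. Unset Strict Implicit.

(* Write (a, b) ∈ B when a s + b t <= ‖s x + t z‖ for all s, t: B is the dual
   unit ball of the plane spanned by x and z.  For a unit vector x and
   c = sqrt(1 - ε²), the vector r x - z lies in F(x, ε) iff c (1, r) ∈ B, so
   F(x1, ε1) = F(x2, ε2) says that c1 (1, r) ∈ B exactly when
   (c2 / r) (1, r) ∈ B.  If x1 and x2 were independent, B would contain the
   support form (1, β) of x1, with β >= 0 after replacing x2 by -x2, and a
   neighbourhood of 0.  Together they give a point of B on the segment
   {c1} × (0, c2) or on its mirror image (0, c1) × {c2}, and going back and
   forth between the two descriptions of B then multiplies its abscissa by a
   fixed factor k > 1, contradicting the boundedness of B.  Hence x1 = ±x2.
   Then, in the plane spanned by x1 and some y outside ℝ x1, c1 < c2 would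
   turn c2 (1, β) ∈ B into c2 (1, β + n h) ∈ B for every n, which is again
   impossible as B is bounded. *)

Lemma progression_unbounded (R : realType) (P : R -> Prop) (h M r0 : R) :
  0 < h -> P r0 -> (forall r, P r -> exists2 r', r + h <= r' & P r') ->
  exists2 r, P r & M < r.
Proof.
move=> h_gt0 Pr0 step.
have grow n : exists2 r, P r & r0 + n%:R * h <= r.
  elim: n => [|n [r Pr le_r]]; first by exists r0; rewrite // mul0r addr0.
  have [r' le_r' Pr'] := step r Pr.
  by exists r' => //; rewrite -natr1 mulrDl mul1r addrA; lra.
have [r Pr le_r] := grow (Num.bound (`|M - r0| / h)).
exists r => //.
have : `|M - r0| / h < (Num.bound (`|M - r0| / h))%:R.
  by apply: archi_boundP; rewrite divr_ge0 // ltW.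
rewrite ltr_pdivrMr // => lt_bound.
have := ler_norm (M - r0); lra.
Qed.

Section Dominated.
Variables (R : realType) (V : normedModType R).
Implicit Types (x z : V) (a b s t : R).

Definition dominated x z a b := forall s t, a * s + b * t <= `|s *: x + t *: z|.

Lemma dominatedC x z a b : dominated x z a b <-> dominated z x b a.
Proof. by split=> D s t; rewrite addrC [_ *: _ + _]addrC; apply: D. Qed.

Lemma dominatedNr x z a b : dominated x z a b -> dominated x (- z) a (- b).
Proof. by move=> D s t; rewrite mulNr -mulrN scalerN -scaleNr; apply: D. Qed.

Lemma dominated_conv x z a b a' b' k : 0 <= k <= 1 ->
  dominated x z a b -> dominated x z a' b' ->
  dominated x z (k * a + (1 - k) * a') (k * b + (1 - k) * b').
Proof.
move=> /andP[k_ge0 k_le1] D D' s t.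
have -> : (k * a + (1 - k) * a') * s + (k * b + (1 - k) * b') * t =
    k * (a * s + b * t) + (1 - k) * (a' * s + b' * t) by ring.
have := ler_wpM2l k_ge0 (D s t).
have k'_ge0 : 0 <= 1 - k by rewrite subr_ge0.
have := ler_wpM2l k'_ge0 (D' s t).
lra.
Qed.

Lemma dominatedZ x z a b k : 0 <= k <= 1 ->
  dominated x z a b -> dominated x z (k * a) (k * b).
Proof.
move=> k01 D.
have D0 : dominated x z 0 0 by move=> s t; rewrite !mul0r addr0.
by have := dominated_conv k01 D D0; rewrite !mulr0 !addr0.
Qed.

Lemma dominated_lel x z a b : dominated x z a b -> a <= `|x|.
Proof. by move=> /(_ 1 0); rewrite mulr1 mulr0 addr0 scale1r scale0r addr0. Qed.

Lemma norm_slope_le x z t1 t2 : `|x| = 1 -> t1 < 0 -> 0 < t2 ->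
  (`|x + t1 *: z| - 1) / t1 <= (`|x + t2 *: z| - 1) / t2.
Proof.
move=> x1 t1_lt0 t2_gt0.
have key : t2 - t1 <= t2 * `|x + t1 *: z| - t1 * `|x + t2 *: z|.
  have E : (t2 - t1) *: x = t2 *: (x + t1 *: z) - t1 *: (x + t2 *: z).
    by rewrite !scalerDr !scalerA scalerBl opprD addrACA mulrC subrr addr0.
  have := ler_normB (t2 *: (x + t1 *: z)) (t1 *: (x + t2 *: z)).
  rewrite -E !normrZ x1 mulr1 (gtr0_norm t2_gt0) (ltr0_norm t1_lt0) gtr0_norm.
    by rewrite mulNr.
  lra.
rewrite ler_pdivlMr // mulrAC ler_ndivrMr //; lra.
Qed.

Lemma norm_affine_minorant x z : `|x| = 1 ->
  exists be, forall tau, 1 + be * tau <= `|x + tau *: z|.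
Proof.
move=> x1; pose f tau := `|x + tau *: z|.
pose S := [set (f tau - 1) / tau | tau in [set tau | tau < 0]].
have S_ub : ubound S ((f 1 - 1) / 1).
  by move=> _ [tau /= tau_lt0 <-]; apply: norm_slope_le.
have S_ne : S !=set0 by exists ((f (-1) - 1) / (-1)); exists (-1) => //=; lra.
exists (sup S) => tau.
case: (ltgtP tau 0) => [tau_lt0|tau_gt0|->].
- have : (f tau - 1) / tau <= sup S.
    by apply: ub_le_sup; [exists ((f 1 - 1) / 1) | exists tau].
  rewrite ler_ndivrMr // /f; lra.
- have : sup S <= (f tau - 1) / tau.
    by apply: ge_sup => // _ [t /= t_lt0 <-]; apply: norm_slope_le.
  rewrite ler_pdivlMr // /f; lra.
- by rewrite mulr0 addr0 scale0r addr0 x1.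
Qed.

Lemma dominated_support x z : `|x| = 1 -> exists be, dominated x z 1 be.
Proof.
move=> x1; have [be minor] := norm_affine_minorant z x1.
have be_le : `|be| <= `|z|.
  have norm_le tau : `|x + tau *: z| <= 1 + `|tau| * `|z|.
    by rewrite -x1 -normrZ ler_normD.
  have := minor 1; have := minor (-1); have := norm_le 1; have := norm_le (-1).
  rewrite normrN normr1; case: (ler0P be) => _; lra.
exists be => s t; rewrite mul1r.
case: (ltrP 0 s) => [s_gt0|s_le0].
- have -> : s *: x + t *: z = s *: (x + (t / s) *: z).
    by rewrite scalerDr scalerA mulrC divfK // gt_eqF.
  have -> : s + be * t = s * (1 + be * (t / s)) by field; rewrite gt_eqF.
  by rewrite normrZ gtr0_norm // ler_wpM2l // ltW.
- have := lerB_normD (t *: z) (s *: x).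
  rewrite [t *: z + _]addrC !normrZ x1 mulr1 (ler0_norm s_le0).
  have := ler_norm (be * t); rewrite normrM.
  have := ler_wpM2r (normr_ge0 t) be_le.
  lra.
Qed.

Lemma line_dist_gt0 x z : `|x| = 1 -> (forall a, z != a *: x) ->
  exists2 d, 0 < d & forall r, d <= `|z + r *: x|.
Proof.
move=> x1 z_indep; pose g r := `|z + r *: x|.
have g_cont : continuous g.
  move=> r; apply: (@continuous_comp _ _ _ (fun r : R => z + r *: x) Num.norm).
    by apply: continuousD; [exact: cvg_cst | exact: scalel_continuous].
  exact: norm_continuous.
have M_ge : - (2 * `|z|) <= 2 * `|z| by have := normr_ge0 z; lra.
have [r0 _ r0_min] := EVT_min M_ge (continuous_subspaceT g_cont).
exists (g r0).
  rewrite normr_gt0; apply: contraNN (z_indep (- r0)) => /eqP z_eq.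
  by rewrite scaleNr -subr_eq0 opprK z_eq.
move=> r; case: (lerP `|r| (2 * `|z|)) => [r_le|r_gt].
  by apply: r0_min; rewrite in_itv /= -ler_norml.
apply: le_trans (r0_min 0 _) _; first by rewrite in_itv /=; lra.
have := lerB_normD (r *: x) z.
rewrite /g scale0r addr0 normrZ x1 mulr1 [r *: x + z]addrC.
lra.
Qed.

Lemma dominated_margin x z : `|x| = 1 -> (forall a, z != a *: x) ->
  exists2 d, 0 < d & dominated x z 0 d /\ dominated x z 0 (- d).
Proof.
move=> x1 z_indep; have [d d_gt0 dist_ge] := line_dist_gt0 x1 z_indep.
have lower s t : d * `|t| <= `|s *: x + t *: z|.
  have [->|t_neq0] := eqVneq t 0; first by rewrite normr0 mulr0.
  have -> : s *: x + t *: z = t *: (z + (s / t) *: x).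
    by rewrite scalerDr scalerA mulrC divfK // addrC.
  by rewrite normrZ mulrC ler_wpM2l.
exists d => //; split=> s t; rewrite mul0r add0r; apply: le_trans (lower s t).
  by apply: ler_wpM2l; [exact: ltW | exact: ler_norm].
rewrite mulNr -mulrN -(normrN t).
by apply: ler_wpM2l; [exact: ltW | exact: ler_norm].
Qed.

Lemma no_dominated_below_corner x z c1 c2 d b :
  0 < c1 -> 0 < d -> 0 < b < c2 ->
  (forall r, 0 < r -> dominated x z c1 (c1 * r) -> dominated x z (c2 / r) c2) ->
  dominated x z 0 (- d) -> ~ dominated x z c1 b.
Proof.
move=> c1_gt0 d_gt0 /andP[b_gt0 b_lt_c2] transfer Dd Db.
pose th := (b + d) / (c2 + d).
have th01 : 0 <= th <= 1 by rewrite divr_ge0 ?ler_pdivrMr ?mul1r; lra.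
pose k := th * c2 / b.
have k_gt1 : 1 < k.
  by rewrite /k /th ltr_pdivlMr // mul1r mulrAC ltr_pdivlMr; nra.
have step a : c1 <= a -> dominated x z a b -> dominated x z (k * a) b.
  move=> c1_le_a Da; have a_gt0 : 0 < a by exact: lt_le_trans c1_gt0 c1_le_a.
  have c1a01 : 0 <= c1 / a <= 1 by rewrite divr_ge0 ?ler_pdivrMr ?mul1r; lra.
  (* (c1 / a) (a, b) transfers to (c2 a / b, c2); averaging with (0, -d)
     comes back to height b with abscissa k a. *)
  have /transfer : dominated x z c1 (c1 * (b / a)).
    by have := dominatedZ c1a01 Da; rewrite divfK ?gt_eqF // mulrAC -mulrA.
  move=> /(_ (divr_gt0 b_gt0 a_gt0)) /(dominated_conv th01)/(_ Dd).
  have -> : th * (c2 / (b / a)) + (1 - th) * 0 = k * a.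
    by rewrite /k; field; rewrite !gt_eqF.
  have -> // : th * c2 + (1 - th) * - d = b.
  by rewrite /th; field; rewrite gt_eqF // addr_gt0 // (lt_trans b_gt0).
have h_gt0 : 0 < (k - 1) * c1 by rewrite mulr_gt0 // subr_gt0.
have [a [_ Da] a_gt] : exists2 a, c1 <= a /\ dominated x z a b & `|x| < a.
  apply: (progression_unbounded _ h_gt0 (conj (lexx c1) Db)) => a [c1_le_a Da].
  exists (k * a); first nra.
  by split; [nra | exact: step].
have := dominated_lel Da; lra.
Qed.

Lemma no_dominated_dilation x z c1 c2 be d :
  0 < c1 < c2 -> c2 <= 1 -> 0 < d ->
  dominated x z 1 be -> dominated x z 0 d ->
  ~ (forall r, dominated x z c1 (c1 * r) -> dominated x z c2 (c2 * r)).
Proof.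
move=> /andP[c1_gt0 c1_lt_c2] c2_le1 d_gt0 Dbe Dd dilate.
have c2_gt0 : 0 < c2 by exact: lt_trans c1_lt_c2.
have th01 : 0 <= c1 / c2 <= 1 by rewrite divr_ge0 ?ler_pdivrMr ?mul1r; lra.
pose h := (c2 - c1) * d / (c2 * c1).
have h_gt0 : 0 < h by rewrite divr_gt0 ?mulr_gt0 ?subr_gt0.
have [r Dr r_gt] : exists2 r, dominated x z c2 (c2 * r) & `|z| / c2 < r.
  apply: (progression_unbounded _ h_gt0 (r0 := be)).
    have c2_01 : 0 <= c2 <= 1 by rewrite ltW.
    by have := dominatedZ c2_01 Dbe; rewrite mulr1.
  move=> r Dr; exists (r + h) => //; apply: dilate.
  have := dominated_conv th01 Dr Dd.
  have -> : c1 / c2 * c2 + (1 - c1 / c2) * 0 = c1 by field; rewrite gt_eqF.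
  have -> // : c1 / c2 * (c2 * r) + (1 - c1 / c2) * d = c1 * (r + h).
  by rewrite /h; field; rewrite !gt_eqF.
move: r_gt; rewrite ltr_pdivrMr // mulrC.
have /dominatedC/dominated_lel := Dr; lra.
Qed.

Lemma dominated_near_corner x z c1 c2 be d d' :
  0 < c1 < 1 -> 0 < c2 < 1 -> 0 <= be -> 0 < d -> 0 < d' ->
  dominated x z 1 be -> dominated x z 0 d -> dominated x z (- d') 0 ->
  (exists2 b, 0 < b < c2 & dominated x z c1 b) \/
  (exists2 a, 0 < a < c1 & dominated x z a c2).
Proof.
move=> /andP[c1_gt0 c1_lt1] /andP[c2_gt0 c2_lt1] be_ge0 d_gt0 d'_gt0 Dbe Dd Dd'.
case: (ltrP (c1 * be) c2) => [lt_c2|ge_c2].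
- pose de := Num.min d (c2 - c1 * be).
  have de_gt0 : 0 < de by rewrite lt_min d_gt0 subr_gt0.
  have [de_le_d de_le] : de <= d /\ de <= c2 - c1 * be by rewrite !ge_min !lexx orbT.
  have Dde : dominated x z 0 de.
    have k01 : 0 <= de / d <= 1 by rewrite divr_ge0 ?ler_pdivrMr ?mul1r //; lra.
    by have := dominatedZ k01 Dd; rewrite mulr0 divfK ?gt_eqF.
  left; exists (c1 * be + (1 - c1) * de); first by apply/andP; split; nra.
  have c1_01 : 0 <= c1 <= 1 by rewrite !ltW.
  by have := dominated_conv c1_01 Dbe Dde; rewrite mulr1 mulr0 addr0.
- have be_gt0 : 0 < be by nra.
  pose th := c2 / be.
  have th_gt0 : 0 < th by rewrite divr_gt0.
  have th_le_c1 : th <= c1 by rewrite ler_pdivrMr.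
  pose de := Num.min d' (th / 2).
  have de_gt0 : 0 < de by rewrite lt_min d'_gt0 divr_gt0.
  have [de_le_d' de_le] : de <= d' /\ de <= th / 2 by rewrite !ge_min !lexx orbT.
  have Dde : dominated x z (- de) 0.
    have k01 : 0 <= de / d' <= 1 by rewrite divr_ge0 ?ler_pdivrMr ?mul1r //; lra.
    by have := dominatedZ k01 Dd'; rewrite mulr0 mulrN divfK ?gt_eqF.
  right; exists (th - (1 - th) * de); first by apply/andP; split; nra.
  have th01 : 0 <= th <= 1 by rewrite ltW //=; lra.
  have := dominated_conv th01 Dbe Dde.
  by rewrite mulr1 mulrN mulr0 addr0 /th divfK ?gt_eqF.
Qed.
End Dominated.

Section ApproximateOrthogonality.
Variables (R : realType) (V : normedModType R).
Implicit Types (x z w : V) (e r : R).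

Definition dcoef e : R := Num.sqrt (1 - e ^+ 2).

Lemma dcoef_itv e : 0 < e < 1 -> 0 < dcoef e < 1.
Proof.
move=> /andP[e_gt0 e_lt1]; apply/andP; split.
  by rewrite sqrtr_gt0 expr2; nra.
by rewrite -[X in _ < X]sqrtr1 ltr_sqrt // expr2; nra.
Qed.

Lemma dcoef_inj e1 e2 : 0 < e1 < 1 -> 0 < e2 < 1 -> dcoef e1 = dcoef e2 -> e1 = e2.
Proof.
move=> /andP[e1_gt0 e1_lt1] /andP[e2_gt0 e2_lt1] /eqP.
rewrite eqr_sqrt ?subr_ge0 ?expr2; [move=> /eqP | nra | nra]; nra.
Qed.

Lemma dorth_dominated x z c r : 0 <= c ->
  (forall l, c <= `|x + l *: (r *: x - z)|) <-> dominated x z c (c * r).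
Proof.
move=> c_ge0; split=> [D s t | D l].
- have [sigma0|sigma_neq0] := eqVneq (s + r * t) 0.
    have -> : c * s + c * r * t = c * (s + r * t) by ring.
    by rewrite sigma0 mulr0.
  have -> : s *: x + t *: z = (s + r * t) *: (x + (- t / (s + r * t)) *: (r *: x - z)).
    rewrite scalerDr !scalerBr !scalerA addrA -scalerDl -scaleNr.
    by congr (_ *: _ + _ *: _); field.
  rewrite normrZ; apply: le_trans (ler_wpM2l (normr_ge0 _) (D _)).
  have -> : c * s + c * r * t = c * (s + r * t) by ring.
  by rewrite mulrC ler_wpM2r // ler_norm.
- have := D (1 + l * r) (- l).
  have -> : c * (1 + l * r) + c * r * - l = c by ring.
  have -> // : (1 + l * r) *: x + - l *: z = x + l *: (r *: x - z).
  by rewrite scalerDl scale1r scaleNr scalerBr scalerA addrA.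
Qed.

Lemma Fset_dominated x z e r : `|x| = 1 ->
  Fset x e (r *: x - z) <-> dominated x z (dcoef e) (dcoef e * r).
Proof.
move=> x1; rewrite -dorth_dominated ?sqrtr_ge0 //.
by rewrite /Fset /dorth /= x1 mulr1.
Qed.

Lemma FsetZ x e w a : Fset x e w -> Fset x e (a *: w).
Proof. by move=> Fw l; rewrite scalerA; apply: Fw. Qed.

Lemma FsetN x e : Fset (- x) e = Fset x e.
Proof.
apply/seteqP; split=> w Fw l /=.
  by have := Fw (- l); rewrite normrN scaleNr -opprD normrN.
by rewrite -[`|- x + _|]normrN opprD opprK -(scaleNr l w) normrN; apply: Fw.
Qed.

Lemma Fset_eq_dominated x z ex ez r : `|x| = 1 -> `|z| = 1 ->
  Fset x ex = Fset z ez -> r != 0 ->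
  dominated x z (dcoef ex) (dcoef ex * r) -> dominated x z (dcoef ez / r) (dcoef ez).
Proof.
move=> x1 z1 hF r_neq0 /(Fset_dominated _ _ _ x1); rewrite hF => /(FsetZ (- r^-1)).
have -> : - r^-1 *: (r *: x - z) = r^-1 *: z - x.
  by rewrite scalerBr scalerA mulNr mulVf // scaleN1r scaleNr opprK addrC.
by move=> /(Fset_dominated _ _ _ z1)/dominatedC.
Qed.

Lemma Fset_eq_collinear x1 x2 e1 e2 : `|x1| = 1 -> `|x2| = 1 ->
  0 < e1 < 1 -> 0 < e2 < 1 -> Fset x1 e1 = Fset x2 e2 -> exists a, x2 = a *: x1.
Proof.
move=> x1u x2u he1 he2 hF; apply: contrapT => x2_indep; move: hF.
have {}x2_indep a : x2 != a *: x1 by apply/eqP => x2E; apply: x2_indep; exists a.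
wlog [be be_ge0 Dbe] : x2 x2u x2_indep / exists2 be, 0 <= be & dominated x1 x2 1 be.
  move=> wlog; have [be Dbe] := dominated_support x2 x1u.
  have [be_ge0 | be_lt0] := lerP 0 be; first by apply: wlog => //; exists be.
  rewrite -(FsetN x2); apply: (wlog (- x2)); first by rewrite normrN.
    by move=> a; rewrite -[a]opprK scaleNr eqr_opp.
  by exists (- be); [lra | exact: dominatedNr].
move=> hF.
have x1_indep a : x1 != a *: x2.
  apply/eqP => x1E; have a_neq0 : a != 0.
    by apply/eqP => a0; move: x1u; rewrite x1E a0 scale0r normr0; lra.
  by move/eqP: (x2_indep a^-1); rewrite x1E scalerA mulVf ?scale1r.
have /andP[c1_gt0 _] := dcoef_itv he1; have /andP[c2_gt0 _] := dcoef_itv he2.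
have [d d_gt0 [Dd Dnd]] := dominated_margin x1u x2_indep.
have [d' d'_gt0 [_ Dnd']] := dominated_margin x2u x1_indep.
have transfer12 r : 0 < r -> dominated x1 x2 (dcoef e1) (dcoef e1 * r) ->
    dominated x1 x2 (dcoef e2 / r) (dcoef e2).
  by move=> r_gt0; apply: Fset_eq_dominated x1u x2u hF (lt0r_neq0 r_gt0).
have transfer21 r : 0 < r -> dominated x2 x1 (dcoef e2) (dcoef e2 * r) ->
    dominated x2 x1 (dcoef e1 / r) (dcoef e1).
  by move=> r_gt0; apply: Fset_eq_dominated x2u x1u (esym hF) (lt0r_neq0 r_gt0).
have /dominatedC Dnd'C := Dnd'.
case: (dominated_near_corner (dcoef_itv he1) (dcoef_itv he2) be_ge0 d_gt0 d'_gt0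
  Dbe Dd Dnd'C) => [[b b_itv Db] | [a a_itv /dominatedC Da]].
  exact: no_dominated_below_corner c1_gt0 d_gt0 b_itv transfer12 Dnd Db.
exact: no_dominated_below_corner c2_gt0 d'_gt0 a_itv transfer21 Dnd' Da.
Qed.

Lemma Fset_eq_same_center x y e1 e2 : `|x| = 1 -> (forall a, y != a *: x) ->
  0 < e1 < 1 -> 0 < e2 < 1 -> Fset x e1 = Fset x e2 -> e1 = e2.
Proof.
move=> xu y_indep he1 he2 hF.
have [be Dbe] := dominated_support y xu.
have [d d_gt0 [Dd _]] := dominated_margin xu y_indep.
have no_lt e e' : 0 < e < 1 -> 0 < e' < 1 -> Fset x e = Fset x e' ->
    ~ dcoef e < dcoef e'.
  move=> he he' hF' lt_c; have /andP[c_gt0 _] := dcoef_itv he.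
  have /andP[_ c'_lt1] := dcoef_itv he'.
  apply: (no_dominated_dilation (c1 := dcoef e) _ (ltW c'_lt1) d_gt0 Dbe Dd).
    by rewrite c_gt0.
  by move=> r /(Fset_dominated _ _ _ xu); rewrite hF' => /(Fset_dominated _ _ _ xu).
case: (ltgtP (dcoef e1) (dcoef e2)) => [lt_c|lt_c|eq_c]; last exact: dcoef_inj.
  by have := no_lt _ _ he1 he2 hF lt_c.
by have := no_lt _ _ he2 he1 (esym hF) lt_c.
Qed.
End ApproximateOrthogonality.

Theorem theorem2p6 (R : realType) (V : normedModType R) (x1 x2 : V) (e1 e2 : R)
  (hdim : exists y : V, forall a : R, y != a *: x1)
  (hx1 : `|x1| = 1) (hx2 : `|x2| = 1)
  (he1 : 0 < e1 < 1) (he2 : 0 < e2 < 1)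
  (hF : Fset x1 e1 = Fset x2 e2) :
  (x1 = x2 \/ x1 = - x2) /\ e1 = e2.
Proof.
have [a x2E] := Fset_eq_collinear hx1 hx2 he1 he2 hF.
have a_norm : `|a| = 1 by move: hx2; rewrite x2E normrZ hx1 mulr1.
have x1E : x1 = x2 \/ x1 = - x2.
  move: a_norm; rewrite x2E; case: (ler0P a) => [a_le0 a_eq|a_gt0 a_eq].
    by right; rewrite (_ : a = -1) ?scaleN1r ?opprK //; lra.
  by left; rewrite (_ : a = 1) ?scale1r //; lra.
split=> //; have [y y_indep] := hdim.
apply: (Fset_eq_same_center hx1 y_indep he1 he2).
by rewrite hF; case: x1E => ->; rewrite ?FsetN.
Qed.
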